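(* Let $T$ be the weighted shift on $\ell^2$ associated to a bounded complex sequence $(a_j)_{j\ge1}$. If both $T$ and its mean transform $M(T)$ are $2$-isometries, then $T$ is an isometry, and in particular $T=\Delta(T)=M(T)$.
   Context: $\ell^2$ has canonical basis $(e_j)_{j\ge1}$; the weighted shift associated to $(a_j)$ is the operator with $Te_j=a_je_{j+1}$. For $T\in B(H)$ with polar decomposition $T=V|T|$ ($|T|=(T^*T)^{1/2}$, $V$ the partial isometry with $\ker V=\ker T$), the Aluthge transform is $\Delta(T)=|T|^{1/2}V|T|^{1/2}$ and the mean transform is $M(T)=\frac12(|T|V+V|T|)$. $T$ is a $2$-isometry if $\|x\|^2-2\|Tx\|^2+\|T^2x\|^2=0$ for all $x\in H$. *)

From Stdlib Require Import Reals.
From Coquelicot Require Import Coquelicot.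
Open Scope R_scope.

(* Vectors of l^2 are complex sequences x : nat -> C (index 0 corresponds to
   the paper's index 1) that are square-summable. *)
Definition seqC := nat -> C.
Definition vzero : seqC := fun _ => 0%C.

Definition l2 (x : seqC) : Prop := ex_series (fun n => (Cmod (x n)) ^ 2).

Definition norm2 (x : seqC) : R := Series (fun n => (Cmod (x n)) ^ 2).

(* <x, y> = sum_n x_n * conj(y_n)  (converges absolutely on l^2) *)
Definition inner (x y : seqC) : C :=
  (Series (fun n => Re (x n * Cconj (y n))%C),
   Series (fun n => Im (x n * Cconj (y n))%C)).

(* Operators are maps on sequences; only their behaviour on l^2 matters. *)
Definition op := seqC -> seqC.

Definition bounded_op (A : op) : Prop :=
  (forall x, l2 x -> l2 (A x)) /\
  (forall x y (c : C), l2 x -> l2 y ->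
     A (fun n => (x n + c * y n)%C) = (fun n => (A x n + c * A y n)%C)) /\
  (exists M : R, forall x, l2 x -> norm2 (A x) <= M * norm2 x).

Definition is_adjoint (A S : op) : Prop :=
  bounded_op S /\ forall x y, l2 x -> l2 y -> inner (A x) y = inner x (S y).

Definition positive_op (P : op) : Prop :=
  bounded_op P /\
  forall x, l2 x -> 0 <= Re (inner (P x) x) /\ Im (inner (P x) x) = 0.

Definition is_sqrt (P Q : op) : Prop :=
  positive_op Q /\ forall x, l2 x -> Q (Q x) = P x.

Definition is_modulus (T P : op) : Prop :=
  positive_op P /\
  forall S, is_adjoint T S -> forall x, l2 x -> P (P x) = S (T x).

Definition partial_isometry (V : op) : Prop :=
  bounded_op V /\
  forall x, l2 x -> (forall y, l2 y -> V y = vzero -> inner x y = 0%C) ->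
    norm2 (V x) = norm2 x.

Definition polar_decomposition (T P V : op) : Prop :=
  is_modulus T P /\ partial_isometry V /\
  (forall x, l2 x -> (V x = vzero <-> T x = vzero)) /\
  (forall x, l2 x -> T x = V (P x)).

(* Aluthge transform |T|^{1/2} V |T|^{1/2}, with Q = |T|^{1/2}. *)
Definition aluthge (Q V : op) : op := fun x => Q (V (Q x)).

(* Mean transform (|T| V + V |T|)/2, with P = |T|. *)
Definition mean_transform (P V : op) : op :=
  fun x n => (/ 2 * (P (V x) n + V (P x) n))%C.

Definition two_isometry (A : op) : Prop :=
  forall x, l2 x -> norm2 x - 2 * norm2 (A x) + norm2 (A (A x)) = 0.

Definition isometry (A : op) : Prop :=
  forall x, l2 x -> norm2 (A x) = norm2 x.

Definition wshift (a : nat -> C) : op :=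
  fun x n => match n with O => 0%C | S m => (a m * x m)%C end.

Definition bounded_seq (a : nat -> C) : Prop := exists M : R, forall n, Cmod (a n) <= M.

From Stdlib Require Import Reals Lra Psatz FunctionalExtensionality.
From Coquelicot Require Import Coquelicot.
Open Scope R_scope.

(* Testing the 2-isometry identity of T on e_k shows that t_k = |a_k|^2 satisfies
   1 - 2 t_k + t_k t_(k+1) = 0, i.e. 1/(t_k - 1) increases by 1 at each step.  If t_0 = 1 then
   every |a_k| = 1, so |T| = |T|^(1/2) = I, V = T, and T is an isometry equal to both transforms.
   Otherwise the t_k are pairwise distinct, so the positive square root |T| of the diagonal
   operator T^*T is itself diagonal, |T| e_k = |a_k| e_k, and M(T) is the weighted shift whose
   weights have moduli (|a_k| + |a_(k+1)|)/2.  The 2-isometry identity of M(T) on e_0 then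
   contradicts the one of T, by convexity of u |-> 1/u^2 and strict convexity of u |-> u^2. *)

Lemma is_series_zero : is_series (fun _ : nat => 0) 0.
Proof.
  apply filterlim_ext with (fun _ => 0); [|apply filterlim_const].
  intro n; induction n as [|n IH]; [now rewrite sum_O|].
  rewrite sum_Sn, <- IH. unfold plus; simpl; ring.
Qed.

Lemma is_series_single (f : nat -> R) (k : nat) :
  (forall n, n <> k -> f n = 0) -> is_series f (f k).
Proof.
  revert f; induction k as [|k IH]; intros f Hf; apply is_series_decr_1.
  - match goal with |- is_series _ ?l => replace l with 0 by (unfold plus, opp; simpl; ring) end.
    eapply is_series_ext; [|apply is_series_zero].
    intro n; symmetry; apply Hf; discriminate.
  - match goal with |- is_series _ ?l => replace l with (f (S k))
      by (rewrite (Hf 0%nat) by discriminate; unfold plus, opp; simpl; ring) end.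
    apply (IH (fun j => f (S j))). intros n Hn. apply Hf. congruence.
Qed.

Lemma Series_single (f : nat -> R) (k : nat) :
  (forall n, n <> k -> f n = 0) -> Series f = f k.
Proof. intro H. apply is_series_unique, is_series_single, H. Qed.

Lemma ex_series_single (f : nat -> R) (k : nat) :
  (forall n, n <> k -> f n = 0) -> ex_series f.
Proof. intro H. exists (f k). apply is_series_single, H. Qed.

Lemma l2_dominated (u v : seqC) (K : R) :
  (forall n, Cmod (u n) ^ 2 <= K * Cmod (v n) ^ 2) -> l2 v -> l2 u.
Proof.
  intros H Hv. apply (ex_series_le (fun n => Cmod (u n) ^ 2) (fun n => K * Cmod (v n) ^ 2)).
  - intro n. change (norm (Cmod (u n) ^ 2)) with (Rabs (Cmod (u n) ^ 2)).
    rewrite Rabs_pos_eq by apply pow2_ge_0. apply H.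
  - exact (ex_series_scal_l K _ Hv).
Qed.

Lemma l2_tail (y : seqC) : l2 y -> l2 (fun n => y (S n)).
Proof. intro H. now apply ex_series_incr_1 in H. Qed.

Lemma l2_add_scal (x y : seqC) (c : C) : l2 x -> l2 y -> l2 (fun n => (x n + c * y n)%C).
Proof.
  intros Hx Hy.
  apply (ex_series_le (fun n => Cmod (x n + c * y n)%C ^ 2) (fun n => 2 * Cmod (x n) ^ 2 + 2 * Cmod c ^ 2 * Cmod (y n) ^ 2)).
  - intro n. change (norm ?r) with (Rabs r). rewrite Rabs_pos_eq by apply pow2_ge_0.
    pose proof (Cmod_triangle (x n) (c * y n)) as T. rewrite Cmod_mult in T.
    pose proof (Cmod_ge_0 (x n + c * y n)%C). pose proof (Cmod_ge_0 (x n)).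
    pose proof (Cmod_ge_0 (y n)). pose proof (Cmod_ge_0 c).
    pose proof (pow2_ge_0 (Cmod (x n) - Cmod c * Cmod (y n))). nra.
  - apply (ex_series_plus (V := R_NormedModule)); now apply (ex_series_scal_l (V := R_NormedModule)).
Qed.

(* Absolute convergence via [|u v| <= (|u|^2 + |v|^2) / 2]. *)
Lemma ex_series_dominated_by_product (f : nat -> R) (u v : seqC) :
  (forall n, Rabs (f n) <= Cmod (u n) * Cmod (v n)) -> l2 u -> l2 v -> ex_series f.
Proof.
  intros H Hu Hv.
  apply (ex_series_le f (fun n => / 2 * Cmod (u n) ^ 2 + / 2 * Cmod (v n) ^ 2)).
  - intro n. change (norm (f n)) with (Rabs (f n)). eapply Rle_trans; [apply H|].
    pose proof (pow2_ge_0 (Cmod (u n) - Cmod (v n))). nra.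
  - apply (ex_series_plus (V := R_NormedModule)); now apply (ex_series_scal_l (V := R_NormedModule)).
Qed.

Lemma Rabs_Im_le_Cmod (c : C) : Rabs (Im c) <= Cmod c.
Proof.
  rewrite <- (Rabs_pos_eq (Cmod c)) by apply Cmod_ge_0. apply Rsqr_le_abs_0.
  unfold Rsqr. pose proof (Cmod2_alt c). pose proof (pow2_ge_0 (Re c)). nra.
Qed.

Lemma ex_series_inner_Re (u v : seqC) : l2 u -> l2 v ->
  ex_series (fun n => Re (u n * Cconj (v n))%C).
Proof.
  apply ex_series_dominated_by_product. intro n.
  rewrite <- (Cmod_conj (v n)), <- Cmod_mult. apply re_le_Cmod.
Qed.

Lemma ex_series_inner_Im (u v : seqC) : l2 u -> l2 v ->
  ex_series (fun n => Im (u n * Cconj (v n))%C).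
Proof.
  apply ex_series_dominated_by_product. intro n.
  rewrite <- (Cmod_conj (v n)), <- Cmod_mult. apply Rabs_Im_le_Cmod.
Qed.

Lemma norm2_ge0 (y : seqC) : l2 y -> 0 <= norm2 y.
Proof.
  intro H. unfold norm2. rewrite <- (is_series_unique _ _ is_series_zero).
  apply Series_le; [|exact H]. intro n; split; [lra|apply pow2_ge_0].
Qed.

Lemma norm2_eq0 (y : seqC) : l2 y -> norm2 y = 0 -> y = vzero.
Proof.
  intros H H0. apply functional_extensionality; intro n. apply Cmod_eq_0.
  set (g := fun m => if Nat.eq_dec m n then Cmod (y n) ^ 2 else 0).
  assert (Hg : forall m, m <> n -> g m = 0).
  { intros m Hm; unfold g; destruct (Nat.eq_dec m n); [contradiction|reflexivity]. }
  assert (Hle : Series g <= norm2 y).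
  { apply Series_le; [|exact H]. intro m; unfold g.
    destruct (Nat.eq_dec m n) as [->|_]; split; try lra; apply pow2_ge_0. }
  rewrite (Series_single g n Hg), H0 in Hle. unfold g in Hle.
  destruct (Nat.eq_dec n n); [|contradiction].
  pose proof (Cmod_ge_0 (y n)). nra.
Qed.

Lemma norm2_tail_le (y : seqC) : l2 y -> norm2 (fun n => y (S n)) <= norm2 y.
Proof.
  intro H. unfold norm2. rewrite (Series_incr_1 (fun n => Cmod (y n) ^ 2)) by exact H.
  pose proof (pow2_ge_0 (Cmod (y 0%nat))). lra.
Qed.

Definition basis_vec (k : nat) (c : C) : seqC := fun n => if Nat.eq_dec n k then c else 0%C.

Lemma basis_vec_eq (k : nat) (c : C) : basis_vec k c k = c.
Proof. unfold basis_vec; destruct (Nat.eq_dec k k); congruence. Qed.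

Lemma basis_vec_neq (k n : nat) (c : C) : n <> k -> basis_vec k c n = 0%C.
Proof. intro H; unfold basis_vec; destruct (Nat.eq_dec n k); congruence. Qed.

Lemma basis_vec_scal (k : nat) (c d : C) :
  (fun n => (c * basis_vec k d n)%C) = basis_vec k (c * d)%C.
Proof.
  apply functional_extensionality; intro n; unfold basis_vec.
  destruct (Nat.eq_dec n k); ring.
Qed.

Lemma l2_basis_vec (k : nat) (c : C) : l2 (basis_vec k c).
Proof.
  apply (ex_series_single _ k). intros n Hn. rewrite basis_vec_neq, Cmod_0 by exact Hn. ring.
Qed.

Lemma norm2_basis_vec (k : nat) (c : C) : norm2 (basis_vec k c) = Cmod c ^ 2.
Proof.
  unfold norm2. rewrite (Series_single _ k), basis_vec_eq; [reflexivity|].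
  intros n Hn. rewrite basis_vec_neq, Cmod_0 by exact Hn. ring.
Qed.

Lemma inner_basis_vec (y : seqC) (k : nat) : inner y (basis_vec k 1) = y k.
Proof.
  unfold inner. rewrite !(Series_single _ k), basis_vec_eq.
  - destruct (y k) as [u v]. simpl. f_equal; ring.
  - intros n Hn. rewrite basis_vec_neq by exact Hn. simpl; ring.
  - intros n Hn. rewrite basis_vec_neq by exact Hn. simpl; ring.
Qed.

Lemma l2_vzero : l2 vzero.
Proof. apply (ex_series_single _ 0%nat). intros n _. unfold vzero. rewrite Cmod_0. ring. Qed.

Lemma bounded_op_vzero (A : op) : bounded_op A -> A vzero = vzero.
Proof.
  intros [_ [Hlin _]]. pose proof (Hlin vzero vzero 1%C l2_vzero l2_vzero) as H.
  replace (fun n => (vzero n + 1 * vzero n)%C) with vzero in H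
    by (apply functional_extensionality; intro; unfold vzero; ring).
  apply functional_extensionality; intro n. apply (f_equal (fun f => f n)) in H.
  unfold vzero at 2 in H. unfold vzero.
  apply (f_equal (fun z => z - A vzero n)%C) in H. ring_simplify in H. now rewrite <- H.
Qed.

Lemma bounded_op_scal (A : op) (y : seqC) (c : C) : bounded_op A -> l2 y ->
  A (fun n => (c * y n)%C) = (fun n => (c * A y n)%C).
Proof.
  intros HA Hy. pose proof HA as [_ [Hlin _]].
  pose proof (Hlin vzero y c l2_vzero Hy) as H.
  replace (fun n => (vzero n + c * y n)%C) with (fun n => (c * y n)%C) in H
    by (apply functional_extensionality; intro; unfold vzero; ring).
  rewrite H, bounded_op_vzero by exact HA.
  apply functional_extensionality; intro; unfold vzero; ring.
Qed.

Lemma bounded_op_basis_vec (A : op) (k : nat) (c : C) : bounded_op A ->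
  A (basis_vec k c) = (fun n => (c * A (basis_vec k 1) n)%C).
Proof.
  intro HA. rewrite <- bounded_op_scal by (exact HA || apply l2_basis_vec).
  now rewrite basis_vec_scal, Cmult_1_r.
Qed.

Lemma positive_op_involution_id (A : op) : positive_op A ->
  (forall x, l2 x -> A (A x) = x) -> forall x, l2 x -> A x = x.
Proof.
  intros [HA Hpos] HAA x Hx.
  set (y := fun n => (A x n + (-1) * x n)%C).
  assert (Hy : l2 y) by (apply l2_add_scal; [apply HA|]; exact Hx).
  assert (HAy : A y = fun n => (x n + (-1) * A x n)%C).
  { unfold y. destruct HA as [HAl2 [Hlin _]]. rewrite Hlin, HAA by auto. reflexivity. }
  (* [A y = - y], so positivity gives [- ||y||^2 >= 0] *)
  assert (Hneg : Re (inner (A y) y) = - norm2 y).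
  { rewrite HAy. unfold inner, norm2. cbn [Re fst]. rewrite <- Series_opp.
    apply Series_ext; intro n. unfold y. rewrite Cmod2_alt.
    destruct (x n), (A x n). simpl. ring. }
  pose proof (proj1 (Hpos y Hy)). pose proof (norm2_ge0 y Hy).
  pose proof (norm2_eq0 y Hy ltac:(lra)) as Hy0.
  apply functional_extensionality; intro n. apply (f_equal (fun f => f n)) in Hy0.
  unfold y, vzero in Hy0. apply (f_equal (fun w => w + x n)%C) in Hy0.
  ring_simplify in Hy0. exact Hy0.
Qed.

Definition diag (d : nat -> R) : op := fun x n => (RtoC (d n) * x n)%C.

Lemma diag_eigenvector (d : nat -> R) (k : nat) (y : seqC) :
  (forall j, j <> k -> d j <> d k) ->
  diag d y = (fun n => (RtoC (d k) * y n)%C) -> y = basis_vec k (y k).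
Proof.
  intros Hd Hy. apply functional_extensionality; intro n. unfold basis_vec.
  destruct (Nat.eq_dec n k) as [->|Hn]; [reflexivity|].
  apply (f_equal (fun f => f n)) in Hy. unfold diag in Hy.
  assert (Hne : RtoC (d n - d k) <> 0%C).
  { intro H. apply (f_equal Re) in H. simpl in H. apply (Hd n Hn). lra. }
  assert (H0 : (RtoC (d n - d k) * y n = 0)%C).
  { rewrite RtoC_minus. apply (f_equal (fun w => w - RtoC (d k) * y n)%C) in Hy.
    ring_simplify in Hy. rewrite <- Hy. ring. }
  rewrite <- (Cmult_1_l (y n)), <- (Cinv_l _ Hne), <- Cmult_assoc, H0. ring.
Qed.

Lemma positive_sqrt_diag_basis_vec (P : op) (d : nat -> R) (k : nat) : positive_op P ->
  (forall x, l2 x -> P (P x) = diag d x) -> (forall j, j <> k -> d j <> d k) ->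
  P (basis_vec k 1) = basis_vec k (RtoC (sqrt (d k))).
Proof.
  intros [HPb Hpos] HPP Hd.
  set (y := P (basis_vec k 1)).
  assert (Hy : l2 y) by apply HPb, l2_basis_vec.
  assert (HPy : P y = basis_vec k (RtoC (d k))).
  { unfold y. rewrite HPP by apply l2_basis_vec.
    apply functional_extensionality; intro n; unfold diag, basis_vec.
    destruct (Nat.eq_dec n k) as [->|]; ring. }
  (* [P] commutes with [P^2 = diag d], so [P e_k] lies in the [d k]-eigenspace, spanned by [e_k]. *)
  assert (Ey : y = basis_vec k (y k)).
  { apply (diag_eigenvector d k y Hd). rewrite <- HPP, HPy by exact Hy.
    apply bounded_op_basis_vec, HPb. }
  destruct (Hpos (basis_vec k 1) (l2_basis_vec k 1)) as [Hre Him].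
  fold y in Hre, Him. rewrite inner_basis_vec in Hre, Him.
  set (r := Re (y k)) in *.
  assert (Eyk : y k = RtoC r) by (unfold r; destruct (y k); simpl in *; now rewrite Him).
  rewrite Eyk in Ey.
  assert (Hr2 : r * r = d k).
  { rewrite Ey, bounded_op_basis_vec in HPy by exact HPb. fold y in HPy.
    apply (f_equal (fun f => Re (f k))) in HPy.
    rewrite Ey, !basis_vec_eq in HPy. simpl in HPy. lra. }
  fold y. rewrite Ey, <- Hr2, sqrt_square by exact Hre. reflexivity.
Qed.

Lemma wshift_basis_vec (a : nat -> C) (k : nat) (c : C) :
  wshift a (basis_vec k c) = basis_vec (S k) (a k * c)%C.
Proof.
  apply functional_extensionality; intros [|n]; unfold basis_vec; simpl.
  - destruct (Nat.eq_dec 0 (S k)); [discriminate|reflexivity].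
  - destruct (Nat.eq_dec n k), (Nat.eq_dec (S n) (S k)); subst; try lia; ring.
Qed.

Lemma Cmod_mult_sq_le (w z : C) (M : R) :
  Cmod w <= M -> Cmod (w * z)%C ^ 2 <= M ^ 2 * Cmod z ^ 2.
Proof.
  intro HM. rewrite Cmod_mult. pose proof (Cmod_ge_0 w). pose proof (Cmod_ge_0 z).
  assert (Cmod w ^ 2 <= M ^ 2) by nra. nra.
Qed.

Lemma l2_wshift (a : nat -> C) (x : seqC) : bounded_seq a -> l2 x -> l2 (wshift a x).
Proof.
  intros [M HM] Hx. apply ex_series_incr_1.
  apply (l2_dominated (fun n => wshift a x (S n)) x (M ^ 2)); [|exact Hx].
  intro n. apply Cmod_mult_sq_le, HM.
Qed.

Definition bshift (a : nat -> C) : op := fun y n => (Cconj (a n) * y (S n))%C.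

Lemma bshift_bounded (a : nat -> C) : bounded_seq a -> bounded_op (bshift a).
Proof.
  intros [M HM].
  assert (Hdom : forall y n, Cmod (bshift a y n) ^ 2 <= M ^ 2 * Cmod (y (S n)) ^ 2).
  { intros y n. apply Cmod_mult_sq_le. rewrite Cmod_conj. apply HM. }
  split; [|split].
  - intros y Hy. exact (l2_dominated _ _ _ (Hdom y) (l2_tail y Hy)).
  - intros x y c _ _. apply functional_extensionality; intro n; unfold bshift; ring.
  - exists (M ^ 2). intros y Hy. unfold norm2.
    apply Rle_trans with (Series (fun n => M ^ 2 * Cmod (y (S n)) ^ 2)).
    + apply Series_le; [|exact (ex_series_scal_l (M ^ 2) _ (l2_tail y Hy))].
      intro n; split; [apply pow2_ge_0|apply Hdom].
    + rewrite Series_scal_l. apply Rmult_le_compat_l; [apply pow2_ge_0|].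
      exact (norm2_tail_le y Hy).
Qed.

Lemma bshift_adjoint (a : nat -> C) : bounded_seq a -> is_adjoint (wshift a) (bshift a).
Proof.
  intro Ha. split; [exact (bshift_bounded a Ha)|]. intros x y Hx Hy.
  pose proof (l2_wshift a x Ha Hx) as HTx. unfold inner. f_equal.
  - rewrite (Series_incr_1 _ (ex_series_inner_Re _ _ HTx Hy)). simpl.
    match goal with |- ?u + _ = _ => replace u with 0 by ring end.
    rewrite Rplus_0_l. apply Series_ext; intro n. simpl. ring.
  - rewrite (Series_incr_1 _ (ex_series_inner_Im _ _ HTx Hy)). simpl.
    match goal with |- ?u + _ = _ => replace u with 0 by ring end.
    rewrite Rplus_0_l. apply Series_ext; intro n. simpl. ring.
Qed.

Lemma bshift_wshift (a : nat -> C) (x : seqC) :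
  bshift a (wshift a x) = diag (fun n => Cmod (a n) ^ 2) x.
Proof.
  apply functional_extensionality; intro n. unfold bshift, diag.
  change (wshift a x (S n)) with (a n * x n)%C. rewrite Cmod2_conj. ring.
Qed.

Lemma two_isometry_wshift_weights (a : nat -> C) (k : nat) : two_isometry (wshift a) ->
  1 - 2 * Cmod (a k) ^ 2 + Cmod (a k) ^ 2 * Cmod (a (S k)) ^ 2 = 0.
Proof.
  intro H. pose proof (H (basis_vec k 1) (l2_basis_vec k 1)) as E.
  rewrite !wshift_basis_vec, !norm2_basis_vec, !Cmod_mult, Cmod_1 in E.
  rewrite <- E. ring.
Qed.

Lemma RtoC_neq_0 (s : R) : s <> 0 -> RtoC s <> 0%C.
Proof. intros Hs H. apply (f_equal Re) in H. simpl in H. exact (Hs H). Qed.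

Lemma polar_isometry_basis_vec (T P V : op) (k : nat) (s : R) (c : C) : bounded_op P ->
  (forall x, l2 x -> T x = V (P x)) -> P (basis_vec k 1) = basis_vec k (RtoC s) -> s <> 0 ->
  V (basis_vec k c) = T (basis_vec k (c / RtoC s)%C).
Proof.
  intros HP HT Hk Hs. rewrite HT by apply l2_basis_vec. f_equal.
  rewrite bounded_op_basis_vec, Hk, basis_vec_scal by exact HP. f_equal.
  field. exact (RtoC_neq_0 s Hs).
Qed.

Lemma mean_transform_wshift_basis_vec (a : nat -> C) (P V : op) (k : nat) (s s' : R) (c : C) :
  bounded_op P -> bounded_op V -> (forall x, l2 x -> wshift a x = V (P x)) ->
  P (basis_vec k 1) = basis_vec k (RtoC s) ->
  P (basis_vec (S k) 1) = basis_vec (S k) (RtoC s') -> s <> 0 ->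
  mean_transform P V (basis_vec k c) =
  basis_vec (S k) (a k * (RtoC s + RtoC s') / (2 * RtoC s) * c)%C.
Proof.
  intros HP HV HT Hk Hk1 Hs. pose proof (RtoC_neq_0 s Hs) as Hs'.
  unfold mean_transform.
  rewrite (polar_isometry_basis_vec (wshift a) P V k s c), wshift_basis_vec by assumption.
  rewrite (bounded_op_basis_vec P (S k)), Hk1 by exact HP.
  rewrite (bounded_op_basis_vec P k), Hk, basis_vec_scal by exact HP.
  rewrite (polar_isometry_basis_vec (wshift a) P V k s), wshift_basis_vec by assumption.
  apply functional_extensionality; intro n. unfold basis_vec.
  destruct (Nat.eq_dec n (S k)); [field; exact Hs'|ring].
Qed.

Lemma Cmod_mean_weight (z : C) (s s' : R) : Cmod z = s -> 0 < s -> 0 <= s' ->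
  Cmod (z * (RtoC s + RtoC s') / (2 * RtoC s))%C = (s + s') / 2.
Proof.
  intros Hz Hs Hs'. rewrite <- RtoC_mult, <- RtoC_plus, Cmod_div, Cmod_mult, !Cmod_R, Hz.
  - rewrite !Rabs_pos_eq by lra. field. lra.
  - apply RtoC_neq_0. lra.
Qed.

Section WeightRecurrence.

Variable t : nat -> R.
Hypothesis t_rec : forall k, 1 - 2 * t k + t k * t (S k) = 0.

Lemma weight_rec_neq0 (k : nat) : t k <> 0.
Proof. intro H. pose proof (t_rec k) as Hk. rewrite H in Hk. lra. Qed.

Lemma weight_rec_const1 : t 0%nat = 1 -> forall k, t k = 1.
Proof. intros H0 k. induction k as [|k IH]; [exact H0|]. pose proof (t_rec k). nra. Qed.

Lemma weight_rec_neq1 : t 0%nat <> 1 -> forall k, t k <> 1.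
Proof. intros H0 k. induction k as [|k IH]; [exact H0|]. pose proof (t_rec k). nra. Qed.

(* [t (S k) - 1 = (t k - 1) / t k], so [1 / (t k - 1)] grows by exactly 1 at each step. *)
Lemma weight_rec_inv_arith : t 0%nat <> 1 ->
  forall n, / (t n - 1) = / (t 0%nat - 1) + INR n.
Proof.
  intros H0 n. induction n as [|n IH]; [simpl; ring|].
  rewrite S_INR, <- Rplus_assoc, <- IH.
  pose proof (weight_rec_neq1 H0 n). pose proof (weight_rec_neq1 H0 (S n)).
  pose proof (weight_rec_neq0 n).
  assert (E : t (S n) - 1 = (t n - 1) / t n).
  { apply (Rmult_eq_reg_r (t n)); [|assumption]. field_simplify; [|assumption].
    pose proof (t_rec n). lra. }
  rewrite E. field. split; lra.
Qed.

Lemma weight_rec_injective : t 0%nat <> 1 -> forall j k, j <> k -> t j <> t k.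
Proof.
  intros H0 j k Hjk E. apply Hjk, INR_eq.
  pose proof (weight_rec_inv_arith H0 j). pose proof (weight_rec_inv_arith H0 k).
  rewrite E in *. lra.
Qed.
End WeightRecurrence.

(* Writing the recurrence as [y^2 = 2 - 1/x^2], the arithmetic means [m0, m1] of consecutive
   terms would need [m1^2 = 2 - 1/m0^2 >= 2 - (1/x^2 + 1/y^2)/2 = (y^2 + z^2)/2], by convexity
   of [1/u^2]; but [m1^2 < (y^2 + z^2)/2] since [y <> z]. *)
Lemma means_break_weight_rec (x y z : R) : 0 < x -> 0 < y -> 0 < z -> y <> z ->
  1 - 2 * x ^ 2 + x ^ 2 * y ^ 2 = 0 -> 1 - 2 * y ^ 2 + y ^ 2 * z ^ 2 = 0 ->
  1 - 2 * ((x + y) / 2) ^ 2 + ((x + y) / 2) ^ 2 * ((y + z) / 2) ^ 2 <> 0.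
Proof.
  intros hx hy hz hyz h1 h2 h3.
  set (m0 := (x + y) / 2) in *. set (m1 := (y + z) / 2) in *.
  assert (hm0 : 0 < m0) by (unfold m0; lra).
  assert (e1 : y ^ 2 = 2 - / x ^ 2) by (field_simplify_eq; [nra|lra]).
  assert (e2 : z ^ 2 = 2 - / y ^ 2) by (field_simplify_eq; [nra|lra]).
  assert (e3 : m1 ^ 2 = 2 - / m0 ^ 2) by (field_simplify_eq; [nra|lra]).
  assert (qm : m1 ^ 2 < (y ^ 2 + z ^ 2) / 2).
  { assert (0 < (y - z) ^ 2) by (destruct (Rlt_or_le y z); nra).
    unfold m1. nra. }
  assert (convex : 2 * / m0 ^ 2 <= / x ^ 2 + / y ^ 2).
  { assert (E : / x ^ 2 + / y ^ 2 - 2 * / m0 ^ 2 =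
                (x - y) ^ 2 * (x ^ 2 + 4 * x * y + y ^ 2) / (x ^ 2 * y ^ 2 * (x + y) ^ 2))
      by (unfold m0; field; lra).
    assert (0 <= (x - y) ^ 2 * (x ^ 2 + 4 * x * y + y ^ 2) / (x ^ 2 * y ^ 2 * (x + y) ^ 2)).
    { apply Rle_mult_inv_pos.
      - apply Rmult_le_pos; [apply pow2_ge_0|nra].
      - repeat apply Rmult_lt_0_compat; nra. }
    lra. }
  lra.
Qed.

Lemma modulus_wshift_sq (a : nat -> C) (P : op) : bounded_seq a -> is_modulus (wshift a) P ->
  forall x, l2 x -> P (P x) = diag (fun n => Cmod (a n) ^ 2) x.
Proof.
  intros Ha [_ HP] x Hx. rewrite (HP (bshift a) (bshift_adjoint a Ha) x Hx).
  apply bshift_wshift.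
Qed.

Lemma polar_wshift_unimodular (a : nat -> C) (P V Q : op) :
  bounded_seq a -> polar_decomposition (wshift a) P V -> is_sqrt P Q ->
  (forall n, Cmod (a n) ^ 2 = 1) ->
  isometry (wshift a) /\
  (forall x, l2 x ->
     wshift a x = aluthge Q V x /\ aluthge Q V x = mean_transform P V x).
Proof.
  intros Ha [HPmod [_ [_ HT]]] [HQpos HQQ] Hunit.
  assert (HPid : forall x, l2 x -> P x = x).
  { apply positive_op_involution_id; [exact (proj1 HPmod)|]. intros x Hx.
    rewrite (modulus_wshift_sq a P Ha HPmod x Hx).
    apply functional_extensionality; intro n. unfold diag. rewrite Hunit. ring. }
  assert (HQid : forall x, l2 x -> Q x = x).
  { apply positive_op_involution_id; [exact HQpos|]. intros x Hx.
    rewrite HQQ by exact Hx. apply HPid, Hx. }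
  assert (HV : forall x, l2 x -> V x = wshift a x).
  { intros x Hx. rewrite HT, HPid by exact Hx. reflexivity. }
  split.
  - intros x Hx. unfold norm2. rewrite (Series_incr_1 _ (l2_wshift a x Ha Hx)).
    simpl wshift. rewrite Cmod_0, pow_i, Rplus_0_l by lia.
    apply Series_ext; intro n. rewrite Cmod_mult, Rpow_mult_distr, Hunit. ring.
  - intros x Hx. pose proof (l2_wshift a x Ha Hx) as HTx. unfold aluthge, mean_transform.
    rewrite (HQid x Hx), (HV x Hx), (HQid _ HTx), (HPid _ HTx), (HPid x Hx), (HV x Hx).
    split; [reflexivity|]. apply functional_extensionality; intro n. field.
Qed.

Lemma mean_two_isometry_wshift_unimodular (a : nat -> C) (P V : op) :
  bounded_seq a -> polar_decomposition (wshift a) P V ->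
  two_isometry (wshift a) -> two_isometry (mean_transform P V) ->
  Cmod (a 0%nat) ^ 2 = 1.
Proof.
  intros Ha [HPmod [[HVb _] [_ HT]]] HT2 HM2.
  pose proof (two_isometry_wshift_weights a) as Hrec. specialize (fun k => Hrec k HT2).
  set (t := fun n => Cmod (a n) ^ 2) in Hrec.
  destruct (Req_dec (t 0%nat) 1) as [|Ht0]; [assumption|exfalso].
  assert (Hs : forall k, 0 < Cmod (a k)).
  { intro k. apply Cmod_gt_0. intro E. apply (weight_rec_neq0 t Hrec k).
    unfold t. rewrite E, Cmod_0. ring. }
  assert (Heig : forall k, P (basis_vec k 1) = basis_vec k (RtoC (Cmod (a k)))).
  { intro k. rewrite <- (sqrt_pow2 (Cmod (a k))) by apply Cmod_ge_0.
    apply (positive_sqrt_diag_basis_vec P t k (proj1 HPmod) (modulus_wshift_sq a P Ha HPmod)).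
    intros j Hj. exact (weight_rec_injective t Hrec Ht0 j k Hj). }
  pose proof (Hs 0%nat); pose proof (Hs 1%nat); pose proof (Hs 2%nat).
  pose proof (HM2 (basis_vec 0 1) (l2_basis_vec 0 1)) as E.
  rewrite !(mean_transform_wshift_basis_vec a P V _ _ _ _ (proj1 (proj1 HPmod)) HVb HT
    (Heig _) (Heig _)) in E by lra.
  rewrite !norm2_basis_vec, !Cmod_mult, Cmod_1, !Cmod_mean_weight in E by (reflexivity || lra).
  apply (means_break_weight_rec (Cmod (a 0%nat)) (Cmod (a 1%nat)) (Cmod (a 2%nat)));
    try assumption.
  - intro E12. apply (weight_rec_injective t Hrec Ht0 1 2); [lia|]. unfold t. now rewrite E12.
  - exact (Hrec 0%nat).
  - exact (Hrec 1%nat).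
  - rewrite <- E. ring.
Qed.

Theorem mainTheorem14 (a : nat -> C) (P V Q : op) :
  bounded_seq a ->
  polar_decomposition (wshift a) P V ->
  is_sqrt P Q ->
  two_isometry (wshift a) ->
  two_isometry (mean_transform P V) ->
  isometry (wshift a) /\
  (forall x, l2 x ->
     wshift a x = aluthge Q V x /\ aluthge Q V x = mean_transform P V x).
Proof.
  intros Ha Hpolar HQ HT2 HM2.
  apply (polar_wshift_unimodular a P V Q Ha Hpolar HQ).
  apply weight_rec_const1.
  - intro k. exact (two_isometry_wshift_weights a k HT2).
  - exact (mean_two_isometry_wshift_unimodular a P V Ha Hpolar HT2 HM2).
Qed.
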